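(* Let $H$ be a transitive permutation group on a finite set $\Delta$ with $|\Delta|\ge2$, let $K$ be a permutation group on a finite nonempty set $\Gamma$, and let $G=H\wr K$ act in product action on $\Omega=\mathrm{Fun}(\Gamma,\Delta)$. Then \[ \mathbf{m}(G)\le\mathbf{m}(H)^{|\Gamma|}. \]
   Context: $\mathrm{Fun}(\Gamma,\Delta)$ is the set of functions $\Gamma\to\Delta$ (the $|\Gamma|$-fold Cartesian power of $\Delta$). The product action of $g=(h_\gamma)_{\gamma\in\Gamma}k\in H\wr K=\mathrm{Fun}(\Gamma,H)\rtimes K$ is $f^g(\gamma)=f(k^{-1}\gamma)^{h_{k^{-1}\gamma}}$ (writing the action of $K$ on $\Gamma$ on the left). For a transitive permutation group $X$ on a finite set with at least $2$ points, a subset $A$ is self-separable for $X$ if there exists $x\in X$ with $A\cap A^x=\emptyset$; $\mathbf{m}(X)$ is the minimum cardinality of a subset that is not self-separable for $X$. *)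

From mathcomp Require Import all_boot all_fingroup.
Set Implicit Arguments. Unset Strict Implicit. Unset Printing Implicit Defensive.

Local Open Scope group_scope.

Definition self_separable (T : finType) (X : {set {perm T}}) (A : {set T}) : bool :=
  [exists x in X, A :&: [set x a | a in A] == set0].

(* m(X): the minimum cardinality of a subset that is not self-separable.
   (The full set is never self-separable on a nonempty T, so the minimum is
   over a nonempty family; #|T| serves as the neutral element of minn.) *)
Definition mnum (T : finType) (X : {set {perm T}}) : nat :=
  \big[minn/#|T|]_(A : {set T} | ~~ self_separable X A) #|A|.

(* The wreath product H wr K in product action on Fun(Gamma, Delta):
   the permutation induced by g = (h_gamma)_gamma k sends f to
   f^g(gamma) = f(k^-1 gamma)^(h_(k^-1 gamma)). *)
Definition wreath_product_action (Gamma Delta : finType)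
    (H : {set {perm Delta}}) (K : {set {perm Gamma}})
    : {set {perm {ffun Gamma -> Delta}}} :=
  [set s : {perm {ffun Gamma -> Delta}} |
    [exists h : {ffun Gamma -> {perm Delta}}, exists k : {perm Gamma},
      [&& [forall c, h c \in H], k \in K &
          [forall f : {ffun Gamma -> Delta},
             s f == [ffun c => h (k^-1 c) (f (k^-1 c))]]]]].

From mathcomp Require Import all_boot all_fingroup.
Set Implicit Arguments. Unset Strict Implicit. Unset Printing Implicit Defensive.

(* If A is not self-separable for H, then every h in H maps some point of A
   into A.  Choosing such a point coordinatewise for the components h_c of an
   element of the wreath product gives a function f with values in A whose
   image is again a function with values in A.  Hence Fun(Gamma, A) is not
   self-separable for H wr K, and taking A of size m(H) gives the bound. *)

Local Open Scope group_scope.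

Section SelfSeparable.

Variables (T : finType) (X : {set {perm T}}).

Lemma not_self_separableP (A : {set T}) :
  reflect (forall x, x \in X -> exists2 a, a \in A & x a \in A)
          (~~ self_separable X A).
Proof.
apply: (iffP existsPn) => [sepN x xX | meetA x].
  have /nandP[/negP // | /set0Pn[y]] := sepN x.
  by rewrite !inE => /andP[yA /imsetP[a aA ya]]; exists a; rewrite -?ya.
apply/nandP; case: (boolP (x \in X)) => [xX | _]; [right | by left].
have [a aA xaA] := meetA x xX.
by apply/set0Pn; exists (x a); rewrite !inE xaA imset_f.
Qed.

Lemma not_self_separable_setT : 0 < #|T| -> ~~ self_separable X [set: T].
Proof.
case/card_gt0P=> t _; apply/not_self_separableP => x _.
by exists (x^-1 t); rewrite ?inE.
Qed.

Lemma mnum_le (A : {set T}) : ~~ self_separable X A -> mnum X <= #|A|.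
Proof.
move=> sepN; rewrite /mnum; have := mem_index_enum A.
elim: (index_enum _) => [// | B r IHr]; rewrite big_cons inE.
case/orP=> [/eqP <- | /IHr]; first by rewrite sepN geq_minl.
by case: ifP => // _ le_r; rewrite geq_min le_r orbT.
Qed.

Lemma mnum_attained :
  0 < #|T| -> exists2 A : {set T}, ~~ self_separable X A & #|A| = mnum X.
Proof.
move=> T_gt0; rewrite /mnum.
apply: (big_ind (fun m => exists2 A : {set T}, ~~ self_separable X A & #|A| = m)).
- by exists [set: T]; rewrite ?cardsT ?not_self_separable_setT.
- by move=> m1 m2 [A1 sep1 <-] [A2 sep2 <-]; rewrite /minn; case: ltnP => _;
    [exists A1 | exists A2].
- by move=> A sepN; exists A.
Qed.

End SelfSeparable.

Lemma wreath_product_actionP (Gamma Delta : finType)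
    (H : {set {perm Delta}}) (K : {set {perm Gamma}}) s :
  s \in wreath_product_action H K ->
  exists2 h : {ffun Gamma -> {perm Delta}}, (forall c, h c \in H) &
    exists2 k, k \in K &
      forall f, s f = [ffun c => h (k^-1 c) (f (k^-1 c))].
Proof.
rewrite inE => /existsP[h /existsP[k /and3P[/forallP hH kK /forallP sf]]].
by exists h => //; exists k => // f; apply/eqP.
Qed.

Lemma not_self_separable_ffun_on (Gamma Delta : finType)
    (H : {set {perm Delta}}) (K : {set {perm Gamma}}) (A : {set Delta}) :
  ~~ self_separable H A ->
  ~~ self_separable (wreath_product_action H K)
                    [set f : {ffun Gamma -> Delta} | f \in ffun_on A].
Proof.
move/not_self_separableP=> sepA; apply/not_self_separableP => s.
case/wreath_product_actionP=> h hH [k _ sf].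
have [a aA haA] := fin_all_exists2 (fun c => sepA (h c) (hH c)).
exists (finfun a); rewrite inE; apply/ffun_onP => c; rewrite ?sf !ffunE //.
Qed.

Theorem theoremH (Gamma Delta : finType)
    (H : {group {perm Delta}}) (K : {group {perm Gamma}})
    (Htrans : [transitive H, on [set: Delta] | 'P])
    (HDelta : 1 < #|Delta|) (HGamma : 0 < #|Gamma|) :
  mnum (wreath_product_action H K) <= mnum H ^ #|Gamma|.
Proof.
have [A sepA <-] := mnum_attained H (ltnW HDelta).
rewrite -card_ffun_on -cardsE.
exact/mnum_le/not_self_separable_ffun_on.
Qed.
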